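(* Define $\mathrm{Mex}(F)=\min(\mathbb{N}_0\setminus F)$ for $F\subseteq\mathbb{N}_0$, and $a+D=\{a+d:d\in D\}$. Define triples $v(n)=(v_1(n),v_2(n),v_3(n))$, $n\ge 0$, recursively by $v(0)=(0,0,0)$ and, for $n\ge 0$, with $F_n=\{v_i(k): 0\le k\le n,\ i\in\{1,2,3\}\}$ and $D_n=\bigcup_{k=0}^{n}\{v_2(k)-v_1(k),\,v_3(k)-v_2(k),\,v_3(k)-v_1(k)\}$, \[ v_1(n+1)=\mathrm{Mex}(F_n),\quad v_2(n+1)=\mathrm{Mex}\big((v_1(n+1)+D_n)\cup\{1,\dots,v_1(n+1)\}\cup F_n\big), \] \[ v_3(n+1)=\mathrm{Mex}\big((v_2(n+1)+D_n)\cup\{1,\dots,v_2(n+1)\}\cup F_n\big). \] Then for every $n\ge 0$, $v_1(n)-2v_2(n)+v_3(n)\in\{0,-1,-2\}$.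
   Context: $\mathbb{N}_0$ denotes the nonnegative integers. *)

From mathcomp Require Import all_boot all_order all_algebra.
Set Implicit Arguments. Unset Strict Implicit. Unset Printing Implicit Defensive.
Import Order.TTheory GRing.Theory Num.Theory.

Lemma notin_seq_ex (s : seq nat) : exists n, n \notin s.
Proof.
have : exists n, forall m, n <= m -> m \notin s.
  elim: s => [|x s [n Hn]]; first by exists 0.
  exists (maxn n x.+1) => m; rewrite geq_max => /andP [H1 H2].
  rewrite in_cons negb_or (Hn m H1) andbT; apply/eqP => E.
  by rewrite E ltnn in H2.
by case=> n Hn; exists n; apply: Hn.
Qed.

Definition Mex (s : seq nat) : nat :=
  ex_minn (notin_seq_ex s).

Definition triple := (nat * nat * nat)%type.
Definition t1 (t : triple) : nat := t.1.1.
Definition t2 (t : triple) : nat := t.1.2.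
Definition t3 (t : triple) : nat := t.2.

Definition Fset (h : seq triple) : seq nat :=
  flatten [seq [:: t1 t; t2 t; t3 t] | t <- h].

Definition Dset (h : seq triple) : seq int :=
  flatten [seq [:: ((t2 t)%:Z - (t1 t)%:Z)%R; ((t3 t)%:Z - (t2 t)%:Z)%R;
                  ((t3 t)%:Z - (t1 t)%:Z)%R] | t <- h].

(* (a + D) intersected with N0, as a seq of naturals *)
Definition shift (a : nat) (D : seq int) : seq nat :=
  [seq absz (a%:Z + d)%R | d <- D & (0 <= a%:Z + d)%R].

Definition next (h : seq triple) : triple :=
  let F := Fset h in
  let D := Dset h in
  let a := Mex F in
  let b := Mex (shift a D ++ iota 1 a ++ F) in
  let c := Mex (shift b D ++ iota 1 b ++ F) in
  (a, b, c).

(* hist n = [:: v(0); ...; v(n)] *)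
Fixpoint hist (n : nat) : seq triple :=
  match n with
  | 0 => [:: (0, 0, 0)]
  | n'.+1 => rcons (hist n') (next (hist n'))
  end.

Definition v (n : nat) : triple := last (0, 0, 0) (hist n).
Definition v1 n := t1 (v n).
Definition v2 n := t2 (v n).
Definition v3 n := t3 (v n).

From Pilot Require Import Defs.
From mathcomp Require Import all_boot all_order all_algebra.
From mathcomp Require Import zify.
Import Order.TTheory GRing.Theory Num.Theory.

Set Implicit Arguments.
Unset Strict Implicit.

(* Write gap1 k = v2 k - v1 k, gap2 k = v3 k - v2 k, and dmex n for the least
   natural number that is not a difference in D_n.  By induction on n one
   shows gap2 k <= gap1 k <= gap2 k + 2, gap1 k < dmex k and
   gap2 k.+1 = dmex k.  Since v1, gap2 and gap1 then strictly increase, the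
   elements of F_n from v1 (n+1) + dmex n on are values v3 k lying at least
   3 apart, and the elements of D_n from dmex n on are spans v3 k - v1 k
   lying at least 2 apart.  So the Mex defining v2 (n+1) is
   v1 (n+1) + dmex n + d with d <= 2, and d = 2 only if dmex n + 1 is in D_n;
   and v3 (n+1) = v2 (n+1) + dmex n.  This restores the invariant, and the
   quantity of the theorem is gap2 n - gap1 n. *)

Lemma Mex_notin (s : seq nat) : Mex s \notin s.
Proof. by rewrite /Mex; case: ex_minnP. Qed.

Lemma mem_ltMex (s : seq nat) y : y < Mex s -> y \in s.
Proof.
rewrite /Mex; case: ex_minnP => m _ min_m lt_ym.
by apply/negPn/negP => /min_m; rewrite leqNgt lt_ym.
Qed.

Lemma Mex_le (s : seq nat) y : y \notin s -> Mex s <= y.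
Proof. by rewrite /Mex; case: ex_minnP => m _; apply. Qed.

Lemma Mex_ge (s : seq nat) z : (forall y, y < z -> y \in s) -> z <= Mex s.
Proof.
by move=> sub_s; rewrite leqNgt; apply/negP => /sub_s; rewrite (negPf (Mex_notin s)).
Qed.

Lemma Mex_sub (s t : seq nat) : {subset s <= t} -> Mex s <= Mex t.
Proof. by move=> sub_st; apply: Mex_ge => y /mem_ltMex /sub_st. Qed.

Lemma vS n : v n.+1 = Defs.next (hist n).
Proof. by rewrite /v /= last_rcons. Qed.

Lemma hist_iota n : hist n = [seq v k | k <- iota 0 n.+1].
Proof.
elim: n => [|n IHn] //.
by rewrite [hist _]/= -vS IHn -(addn1 n.+1) iotaD map_cat cats1.
Qed.

Definition blocked (z : nat) (h : seq triple) : seq nat :=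
  shift z (Dset h) ++ iota 1 z ++ Fset h.

Lemma v1S n : v1 n.+1 = Mex (Fset (hist n)).
Proof. by rewrite /v1 vS. Qed.

Lemma v2S n : v2 n.+1 = Mex (blocked (v1 n.+1) (hist n)).
Proof. by rewrite v1S /v2 vS. Qed.

Lemma v3S n : v3 n.+1 = Mex (blocked (v2 n.+1) (hist n)).
Proof. by rewrite v2S v1S /v3 vS. Qed.

Lemma Fset_hist n :
  Fset (hist n) = flatten [seq [:: v1 k; v2 k; v3 k] | k <- iota 0 n.+1].
Proof. by rewrite /Fset hist_iota -map_comp. Qed.

Lemma mem_FsetP n (x : nat) :
  reflect (exists2 k, k <= n & x \in [:: v1 k; v2 k; v3 k]) (x \in Fset (hist n)).
Proof.
rewrite Fset_hist; apply: (iffP flatten_mapP) => -[k k_n x_k]; exists k => //.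
  by rewrite mem_iota in k_n.
by rewrite mem_iota.
Qed.

Lemma Fset_sub i j : i <= j -> {subset Fset (hist i) <= Fset (hist j)}.
Proof.
move=> le_ij x /mem_FsetP [k le_ki x_k]; apply/mem_FsetP.
by exists k => //; apply: leq_trans le_ij.
Qed.

Lemma v_in_Fset n k : k <= n -> [/\ v1 k \in Fset (hist n), v2 k \in Fset (hist n)
  & v3 k \in Fset (hist n)].
Proof. by move=> le_kn; split; apply/mem_FsetP; exists k; rewrite // !inE eqxx ?orbT. Qed.

Lemma v1_lt_v1S n : v1 n < v1 n.+1.
Proof.
have [v1_in _ _] := v_in_Fset (leqnn n).
rewrite ltn_neqAle; apply/andP; split.
  by apply: contraTneq v1_in => ->; rewrite v1S Mex_notin.
case: n v1_in => [|n] _ //; rewrite !v1S; apply: Mex_sub; exact: Fset_sub.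
Qed.

Lemma v1_increasing : {homo v1 : i j / i < j}.
Proof. exact: homo_ltn ltn_trans v1_lt_v1S. Qed.

Lemma Mex_blocked_gt z h : 0 \in Fset h -> z < Mex (blocked z h).
Proof.
move=> F0; apply: Mex_ge => -[|y] le_yz; first by rewrite !mem_cat F0 !orbT.
by rewrite !mem_cat mem_iota add1n le_yz orbT.
Qed.

Lemma v_sorted k : v1 k <= v2 k <= v3 k.
Proof.
case: k => [|k]; first by [].
have [F0 _ _] := v_in_Fset (leq0n k).
by apply/andP; split; apply: ltnW; rewrite ?v3S ?v2S; apply: Mex_blocked_gt.
Qed.

Definition gap1 k := v2 k - v1 k.
Definition gap2 k := v3 k - v2 k.

Definition diffs n : seq nat :=
  flatten [seq [:: gap1 k; gap2 k; gap1 k + gap2 k] | k <- iota 0 n.+1].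

Definition dmex n := Mex (diffs n).

Lemma Dset_hist n : Dset (hist n) = map Posz (diffs n).
Proof.
rewrite /Dset hist_iota map_flatten -!map_comp; congr flatten; apply: eq_map => k /=.
have /andP [le12 le23] := v_sorted k.
by congr [:: _; _; _]; rewrite -/(v1 k) -/(v2 k) -/(v3 k) /gap1 /gap2; lia.
Qed.

Lemma mem_diffsP n (e : nat) :
  reflect (exists2 k, k <= n & e \in [:: gap1 k; gap2 k; gap1 k + gap2 k]) (e \in diffs n).
Proof.
apply: (iffP flatten_mapP) => -[k k_n e_k]; exists k => //.
  by rewrite mem_iota in k_n.
by rewrite mem_iota.
Qed.

Lemma diffs_sub i j : i <= j -> {subset diffs i <= diffs j}.
Proof.
move=> le_ij e /mem_diffsP [k le_ki e_k]; apply/mem_diffsP.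
by exists k => //; apply: leq_trans le_ij.
Qed.

Lemma dmex_mono : {homo dmex : i j / i <= j}.
Proof. by move=> i j le_ij; apply: Mex_sub; apply: diffs_sub. Qed.

Lemma gaps_in_diffs n : [/\ gap1 n \in diffs n, gap2 n \in diffs n
  & gap1 n + gap2 n \in diffs n].
Proof. by split; apply/mem_diffsP; exists n; rewrite // !inE eqxx ?orbT. Qed.

Lemma mem_addn_map z (s : seq nat) (x : nat) :
  (x \in [seq z + e | e <- s]) = (z <= x) && (x - z \in s).
Proof.
apply/mapP/andP => [[e e_s ->]|[le_zx xz_s]]; first by rewrite leq_addr addKn.
by exists (x - z); rewrite ?subnKC.
Qed.

Lemma shift_hist z n : shift z (Dset (hist n)) = [seq z + e | e <- diffs n].
Proof.
by rewrite /shift Dset_hist filter_map -map_comp (eq_in_filter (a2 := predT))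
  ?filter_predT.
Qed.

Lemma mem_blocked z n (x : nat) : (x \in blocked z (hist n)) =
  [|| (z <= x) && (x - z \in diffs n), 0 < x <= z | x \in Fset (hist n)].
Proof.
by rewrite /blocked mem_cat (mem_cat x (iota 1 z)) shift_hist mem_addn_map
  mem_iota add1n ltnS.
Qed.

Lemma diffs0 n : 0 \in diffs n.
Proof. by apply/mem_diffsP; exists 0. Qed.

Lemma dmex_gt0 n : 0 < dmex n.
Proof. by apply: Mex_ge => -[|//] _; apply: diffs0. Qed.

Lemma dmex_notin n : dmex n \notin diffs n.
Proof. exact: Mex_notin. Qed.

Lemma Mex_blocked_ge z n : z + dmex n <= Mex (blocked z (hist n)).
Proof.
have [F0 _ _] := v_in_Fset (leq0n n).
apply: Mex_ge => y lt_y; rewrite mem_blocked.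
case: (leqP y z) => [le_yz | lt_zy]; last first.
  by rewrite (ltnW lt_zy) mem_ltMex // -/(dmex n); lia.
by case: y {lt_y} le_yz => [|y] le_yz; rewrite ?F0 ?le_yz ?orbT.
Qed.

Lemma Mex_blocked_le z n e : e \notin diffs n -> z + e \notin Fset (hist n) ->
  Mex (blocked z (hist n)) <= z + e.
Proof.
move=> e_diffs ze_F; apply: Mex_le.
have e_gt0 : 0 < e by rewrite lt0n; apply: contraNneq e_diffs => ->; apply: diffs0.
by rewrite mem_blocked leq_addr addKn (negPf e_diffs) (negPf ze_F) orbF; lia.
Qed.

Definition regular_upto n :=
  (forall k, k <= n -> gap2 k <= gap1 k <= (gap2 k).+2 /\ gap1 k < dmex k) /\
  (forall k, k < n -> gap2 k.+1 = dmex k).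

Section Step.

Variable n : nat.
Hypothesis reg_n : regular_upto n.

Lemma gap2_le_gap1 k : k <= n -> gap2 k <= gap1 k.
Proof. by move=> le_kn; have [/andP [] ] := reg_n.1 k le_kn. Qed.

Lemma gap1_lt_dmex k : k <= n -> gap1 k < dmex n.
Proof.
move=> le_kn; have [_ lt_k] := reg_n.1 k le_kn.
exact: leq_trans lt_k (dmex_mono le_kn).
Qed.

Lemma gap1_lt_gap2 i j : i < j -> j <= n -> gap1 i < gap2 j.
Proof.
case: j => [|j] //; rewrite ltnS => le_ij lt_jn; rewrite reg_n.2 //.
have [_ lt_i] := reg_n.1 i (leq_trans le_ij (ltnW lt_jn)).
exact: leq_trans lt_i (dmex_mono le_ij).
Qed.

Lemma v3_sep i j : i < j -> j <= n -> v3 i + 3 <= v3 j.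
Proof.
move=> lt_ij le_jn; have le_in := ltnW (leq_trans lt_ij le_jn).
have := gap1_lt_gap2 lt_ij le_jn; have := gap2_le_gap1 le_in; have := gap2_le_gap1 le_jn.
have := v1_increasing lt_ij; have := v_sorted i; have := v_sorted j.
rewrite /gap1 /gap2; lia.
Qed.

Lemma span_sep i j : i < j -> j <= n -> (gap1 i + gap2 i).+2 <= gap1 j + gap2 j.
Proof.
move=> lt_ij le_jn; have le_in := ltnW (leq_trans lt_ij le_jn).
have := gap1_lt_gap2 lt_ij le_jn; have := gap2_le_gap1 le_in; have := gap2_le_gap1 le_jn; lia.
Qed.

Lemma Fset_tail (x : nat) : x \in Fset (hist n) -> v1 n.+1 + dmex n <= x ->
  exists2 k, k <= n & x = v3 k.
Proof.
move=> /mem_FsetP [k le_kn x_k] x_tail; exists k => //.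
have := @v1_increasing k n.+1 le_kn; have := gap1_lt_dmex le_kn.
have := v_sorted k; have := dmex_gt0 n.
by move: x_k x_tail; rewrite /gap1 !inE => /or3P [] /eqP ->; lia.
Qed.

Lemma Fset_tail_gap (x e : nat) : x \in Fset (hist n) -> v1 n.+1 + dmex n <= x ->
  0 < e < 3 -> x + e \notin Fset (hist n).
Proof.
move=> x_F x_tail e_range; apply/negP => xe_F.
have [i le_in x_i] := Fset_tail x_F x_tail.
have [j le_jn xe_j] := Fset_tail xe_F (leq_trans x_tail (leq_addr _ _)).
case: (ltngtP i j) => [lt_ij|lt_ji|eq_ij].
- by have := v3_sep lt_ij le_jn; lia.
- by have := v3_sep lt_ji le_in; lia.
- by move: xe_j; rewrite x_i eq_ij; lia.
Qed.

Lemma diffs_tail (e : nat) : e \in diffs n -> dmex n <= e ->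
  exists2 k, k <= n & e = gap1 k + gap2 k.
Proof.
move=> /mem_diffsP [k le_kn e_k] e_tail; exists k => //.
have := gap1_lt_dmex le_kn; have := gap2_le_gap1 le_kn.
by move: e_k e_tail; rewrite !inE => /or3P [] /eqP ->; lia.
Qed.

Lemma diffs_tail_gap (e : nat) : e \in diffs n -> dmex n <= e -> e.+1 \notin diffs n.
Proof.
move=> e_D e_tail; apply/negP => e1_D.
have [i le_in e_i] := diffs_tail e_D e_tail.
have [j le_jn e1_j] := diffs_tail e1_D (leqW e_tail).
case: (ltngtP i j) => [lt_ij|lt_ji|eq_ij].
- by have := span_sep lt_ij le_jn; lia.
- by have := span_sep lt_ji le_in; lia.
- by move: e1_j; rewrite e_i eq_ij; lia.
Qed.

Lemma Fset_lt (x : nat) : x \in Fset (hist n) -> x < v1 n.+1 + 2 * dmex n.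
Proof.
move=> /mem_FsetP [k le_kn x_k].
have := @v1_increasing k n.+1 le_kn; have := gap1_lt_dmex le_kn.
have := gap2_le_gap1 le_kn; have := v_sorted k.
by move: x_k; rewrite /gap1 /gap2 !inE => /or3P [] /eqP ->; lia.
Qed.

Lemma v2S_ub : v2 n.+1 <= v1 n.+1 + dmex n + 2 /\
  ((dmex n).+1 \notin diffs n -> v2 n.+1 <= v1 n.+1 + dmex n + 1).
Proof.
rewrite v2S; have m_D := dmex_notin n.
have [am_F|am_F] := boolP (v1 n.+1 + dmex n \in Fset (hist n)); last first.
  by have := Mex_blocked_le m_D am_F; lia.
have free e : dmex n < e < dmex n + 3 -> v1 n.+1 + e \notin Fset (hist n).
  move=> e_range; have -> : v1 n.+1 + e = v1 n.+1 + dmex n + (e - dmex n) by lia.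
  by apply: Fset_tail_gap => //; lia.
have [m1_D|m1_D] := boolP ((dmex n).+1 \in diffs n).
  have m2_D := diffs_tail_gap m1_D (leqnSn _).
  by have := Mex_blocked_le m2_D (free _ _); lia.
by have := Mex_blocked_le m1_D (free _ _); lia.
Qed.

Lemma gap2S : gap2 n.+1 = dmex n.
Proof.
have b_ge : v1 n.+1 + dmex n <= v2 n.+1 by rewrite v2S; apply: Mex_blocked_ge.
have bm_F : v2 n.+1 + dmex n \notin Fset (hist n) by apply/negP => /Fset_lt; lia.
have := Mex_blocked_le (dmex_notin n) bm_F; have := Mex_blocked_ge (v2 n.+1) n.
by rewrite /gap2 v3S; lia.
Qed.

Lemma gap1S_bounds : dmex n <= gap1 n.+1 <= (dmex n).+2 /\
  (gap1 n.+1 = (dmex n).+2 -> (dmex n).+1 \in diffs n).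
Proof.
have b_ge : v1 n.+1 + dmex n <= v2 n.+1 by rewrite v2S; apply: Mex_blocked_ge.
have [b_le b_le1] := v2S_ub; rewrite /gap1; split; first by lia.
by move=> gap_max; apply/negPn/negP => /b_le1; lia.
Qed.

Lemma gap1S_lt_dmexS : gap1 n.+1 < dmex n.+1.
Proof.
have [/andP [ge_m le_m2] at_m2] := gap1S_bounds.
have [g1_D g2_D _] := gaps_in_diffs n.+1; rewrite gap2S in g2_D.
apply: Mex_ge => e; rewrite ltnS => le_e.
have [lt_em|gt_em|->] := ltngtP e (dmex n); last exact: g2_D.
  exact: diffs_sub (leqnSn n) _ (mem_ltMex lt_em).
have [->|ne_e] := eqVneq e (gap1 n.+1); first exact: g1_D.
have e_m1 : e = (dmex n).+1 by lia.
by rewrite e_m1; apply: diffs_sub (leqnSn n) _ (at_m2 _); lia.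
Qed.

Lemma regular_upto_S : regular_upto n.+1.
Proof.
split=> k.
- rewrite leq_eqVlt ltnS => /orP [/eqP ->|le_kn]; last exact: reg_n.1.
  have [/andP [ge_m le_m2] _] := gap1S_bounds.
  by rewrite gap2S ge_m le_m2 gap1S_lt_dmexS.
- rewrite ltnS leq_eqVlt => /orP [/eqP ->|lt_kn]; [exact: gap2S | exact: reg_n.2].
Qed.

End Step.

Lemma regular_upto_all n : regular_upto n.
Proof.
elim: n => [|n IHn]; last exact: regular_upto_S.
by split=> -[|k] //; rewrite dmex_gt0.
Qed.

Theorem corollary5 (n : nat) :
  ((v1 n)%:Z - 2 * (v2 n)%:Z + (v3 n)%:Z)%R \in [:: 0%R; (-1)%R; (-2)%R].
Proof.
have [/andP [le21 le12] _] := (regular_upto_all n).1 n (leqnn n).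
have := v_sorted n; move: le21 le12; rewrite /gap1 /gap2 !inE; lia.
Qed.
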